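(* Let $\mathbf{H}\in\mathbb{R}^{n\times m}$ and $\mathbf{v}\in\mathbb{R}^n$ be arbitrary and let $\mathbf{y}=\mathbf{H}\mathbf{e}+\mathbf{v}$. If $\tau>4\|\mathbf{v}\|^2$, then every optimal point $\mathbf{X}^\star$ of the SDR problem $\min\mathrm{Tr}(\mathbf{L}\mathbf{X})$ s.t. $\mathrm{diag}(\mathbf{X})=\mathbf{e}$, $\mathbf{X}\succeq\mathbf{0}$ yields $\hat{\mathbf{s}}_{\mathrm{SDR}}=\mathbf{e}$, i.e. $\mathrm{sgn}([\mathbf{X}^\star]_{i,m+1})=1$ for all $i=1,\dots,m$.
   Context: $\mathbf{e}$ is the all-ones vector (of the appropriate dimension). $\mathbf{L}=\begin{bmatrix}\mathbf{H}^T\mathbf{H}&-\mathbf{H}^T\mathbf{y}\\-\mathbf{y}^T\mathbf{H}&\mathbf{y}^T\mathbf{y}\end{bmatrix}$. $\mathcal{X}=\{\mathbf{X}\in\mathbb{S}^{m+1}:\mathrm{diag}(\mathbf{X})=\mathbf{e},\ \mathbf{X}\succeq\mathbf{0}\}$, where $\mathbb{S}^{k}$ is the set of real symmetric $k\times k$ matrices. $\mathbf{M}=[\mathbf{I}_m\ \ -\mathbf{e}]\in\mathbb{R}^{m\times(m+1)}$, $\mathcal{H}=\{\mathbf{X}\in\mathbb{S}^{m+1}:\mathrm{Tr}(\mathbf{M}\mathbf{X}\mathbf{M}^T)=1\}$, $\mathbf{L}_0=\mathbf{M}^T\mathbf{H}^T\mathbf{H}\mathbf{M}$, and $\tau=\min_{\mathbf{X}\in\mathcal{X}\cap\mathcal{H}}\mathrm{Tr}(\mathbf{L}_0\mathbf{X})$.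 The SDR estimate from an optimal point $\mathbf{X}^\star$ is $[\hat{\mathbf{s}}_{\mathrm{SDR}}]_i=\mathrm{sgn}([\mathbf{X}^\star]_{i,m+1})$ with $\mathrm{sgn}(x)=1$ for $x>0$, $-1$ for $x\le0$. *)

From HB Require Import structures.
From mathcomp Require Import all_boot all_order all_algebra.
Set Implicit Arguments. Unset Strict Implicit. Unset Printing Implicit Defensive.
Import Order.TTheory GRing.Theory Num.Theory.
Local Open Scope ring_scope.

Definition psd (R : realFieldType) (k : nat) (X : 'M[R]_k) : Prop :=
  X^T = X /\ forall x : 'cV[R]_k, 0 <= (x^T *m X *m x) 0 0.

Definition feasX (R : realFieldType) (k : nat) (X : 'M[R]_k) : Prop :=
  (forall i, X i i = 1) /\ psd X.

Definition ones (R : realFieldType) (k : nat) : 'cV[R]_k := const_mx 1.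

Definition yvec (R : realFieldType) n m (H : 'M[R]_(n, m)) (v : 'cV[R]_n)
  : 'cV[R]_n := H *m ones R m + v.

Definition Lmat (R : realFieldType) n m (H : 'M[R]_(n, m)) (y : 'cV[R]_n)
  : 'M[R]_(m + 1) :=
  block_mx (H^T *m H) (- (H^T *m y)) (- (y^T *m H)) (y^T *m y).

Definition Mmat (R : realFieldType) m : 'M[R]_(m, m + 1) :=
  row_mx 1%:M (- ones R m).

Definition L0mat (R : realFieldType) n m (H : 'M[R]_(n, m)) : 'M[R]_(m + 1) :=
  (Mmat R m)^T *m H^T *m H *m Mmat R m.

Definition inH (R : realFieldType) m (X : 'M[R]_(m + 1)) : Prop :=
  \tr (Mmat R m *m X *m (Mmat R m)^T) = 1.

Definition is_tau (R : realFieldType) n m (H : 'M[R]_(n, m)) (t : R) : Prop :=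
  (exists X : 'M[R]_(m + 1), feasX X /\ inH X /\ \tr (L0mat H *m X) = t) /\
  (forall X : 'M[R]_(m + 1), feasX X -> inH X -> t <= \tr (L0mat H *m X)).

Definition sdr_optimal (R : realFieldType) k (L X : 'M[R]_k) : Prop :=
  feasX X /\ forall Y : 'M[R]_k, feasX Y -> \tr (L *m X) <= \tr (L *m Y).

Definition sgn (R : realFieldType) (x : R) : R := if 0 < x then 1 else -1.

Definition sqnorm (R : realFieldType) n (v : 'cV[R]_n) : R :=
  \sum_(i < n) v i 0 ^+ 2.

(* The all-ones point J = e e^T is feasible for the SDR and Tr(L J) = |v|^2, so an optimal X
   satisfies Tr(L X) <= |v|^2.  Writing L = A^T A with A = H M - v e_(m+1)^T and using the
   parallelogram law for the form (U, V) |-> Tr(U X V^T), this gives Tr(L0 X) <= 4 |v|^2.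
   If some X_(i,m+1) were <= 0, then s = Tr(M X M^T) >= 2 and the point J + (X - J)/s lies
   in the feasible set of the problem defining tau (M J = 0), whence
   tau * s <= Tr(L0 X) <= 4 |v|^2 < tau, which is impossible. *)

From mathcomp Require Import all_boot all_order all_algebra ring lra.
Set Implicit Arguments. Unset Strict Implicit. Unset Printing Implicit Defensive.
Import Order.TTheory GRing.Theory Num.Theory.
Local Open Scope ring_scope.

Section MatrixForm.
Variable R : realFieldType.

Definition mxform n k (X : 'M[R]_k) (U V : 'M[R]_(n, k)) : R := \tr (U *m X *m V^T).

Lemma mxformDl n k (X : 'M[R]_k) (U V W : 'M[R]_(n, k)) :
  mxform X (U + V) W = mxform X U W + mxform X V W.
Proof. by rewrite /mxform !mulmxDl mxtraceD. Qed.

Lemma mxformDr n k (X : 'M[R]_k) (U V W : 'M[R]_(n, k)) :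
  mxform X W (U + V) = mxform X W U + mxform X W V.
Proof. by rewrite /mxform raddfD !mulmxDr mxtraceD. Qed.

Lemma mxformNl n k (X : 'M[R]_k) (U W : 'M[R]_(n, k)) :
  mxform X (- U) W = - mxform X U W.
Proof. by rewrite /mxform !mulNmx raddfN. Qed.

Lemma mxformNr n k (X : 'M[R]_k) (U W : 'M[R]_(n, k)) :
  mxform X W (- U) = - mxform X W U.
Proof. by rewrite /mxform raddfN !mulmxN raddfN. Qed.

Lemma mxform_parallelogram n k (X : 'M[R]_k) (U W : 'M[R]_(n, k)) :
  mxform X (U + W) (U + W) + mxform X (U - W) (U - W) =
  2 * mxform X U U + 2 * mxform X W W.
Proof. rewrite !(mxformDl, mxformDr, mxformNl, mxformNr); ring. Qed.

Lemma mxformC n k (X : 'M[R]_k) (U V : 'M[R]_(n, k)) :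
  X^T = X -> mxform X U V = mxform X V U.
Proof. by move=> sX; rewrite /mxform -mxtrace_tr !trmx_mul trmxK sX mulmxA. Qed.

Lemma mxform_combination n k (X Y : 'M[R]_k) (U V : 'M[R]_(n, k)) a b :
  mxform (a *: X + b *: Y) U V = a * mxform X U V + b * mxform Y U V.
Proof.
by rewrite /mxform mulmxDr mulmxDl -!scalemxAr -!scalemxAl mxtraceD !mxtraceZ.
Qed.

Lemma mxform_mul0 n k (X : 'M[R]_k) (U V : 'M[R]_(n, k)) :
  U *m X = 0 -> mxform X U V = 0.
Proof. by move=> UX0; rewrite /mxform UX0 mul0mx raddf0. Qed.

Lemma mxtrace11 (A : 'M[R]_1) : \tr A = A 0 0.
Proof. by rewrite /mxtrace big_ord1. Qed.

Lemma mxform_delta k (X : 'M[R]_k) a b :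
  mxform X (delta_mx 0 a : 'rV_k) (delta_mx 0 b) = X a b.
Proof. by rewrite /mxform -rowE trmx_delta -colE mxtrace11 !mxE. Qed.

Lemma mxform_outer n k (X : 'M[R]_k) (v : 'cV[R]_n) r :
  mxform X (v *m delta_mx 0 r) (v *m delta_mx 0 r) = X r r * sqnorm v.
Proof.
set d : 'rV_k := delta_mx 0 r.
have -> : mxform X (v *m d) (v *m d) = \tr (v *m (d *m X *m d^T) *m v^T).
  by rewrite /mxform trmx_mul !mulmxA.
rewrite [d *m X *m d^T]mx11_scalar -mxtrace11.
change (\tr (d *m X *m d^T)) with (mxform X d d).
rewrite mxform_delta mul_mx_scalar.
rewrite -scalemxAl mxtraceZ /mxtrace /sqnorm.
by congr (_ * _); apply: eq_bigr => i _; rewrite !mxE big_ord1 !mxE expr2.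
Qed.

Lemma mxtrace_gram n k (A : 'M[R]_(n, k)) (X : 'M[R]_k) :
  \tr (A^T *m A *m X) = mxform X A A.
Proof. by rewrite -mulmxA mxtrace_mulC. Qed.

Lemma mxform_row_diag p k (X : 'M[R]_k) (B : 'M[R]_(p, k)) i :
  (B *m X *m B^T) i i = mxform X (row i B) (row i B).
Proof.
rewrite /mxform mxtrace11 !mxE; apply: eq_bigr => j _; rewrite !mxE; congr (_ * _).
by apply: eq_bigr => l _; rewrite !mxE.
Qed.

Lemma psd_mxform_row_ge0 k (X : 'M[R]_k) (w : 'rV[R]_k) :
  psd X -> 0 <= mxform X w w.
Proof. by move=> [_ psdX]; rewrite /mxform mxtrace11 -{1}[w]trmxK. Qed.

Lemma psd_mxform_ge0 p k (X : 'M[R]_k) (B : 'M[R]_(p, k)) :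
  psd X -> 0 <= mxform X B B.
Proof.
move=> psdX; rewrite {1}/mxform /mxtrace; apply: sumr_ge0 => i _.
by rewrite mxform_row_diag psd_mxform_row_ge0.
Qed.

Lemma sqnorm_ge0 n (v : 'cV[R]_n) : 0 <= sqnorm v.
Proof. by apply: sumr_ge0 => i _; apply: sqr_ge0. Qed.

Lemma psd_outer k (w : 'cV[R]_k) : psd (w *m w^T).
Proof.
split=> [|x]; first by rewrite trmx_mul trmxK.
have -> : x^T *m (w *m w^T) *m x = (x^T *m w) *m (x^T *m w)^T.
  by rewrite trmx_mul trmxK !mulmxA.
by rewrite !mxE big_ord1 !mxE -expr2 sqr_ge0.
Qed.

Lemma feasX_outer_ones k : feasX (ones R k *m (ones R k)^T).
Proof.
split=> [i|]; last exact: psd_outer.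
by rewrite !mxE big_ord1 !mxE mulr1.
Qed.

Lemma feasX_convex k (X Y : 'M[R]_k) t :
  feasX X -> feasX Y -> 0 <= t <= 1 -> feasX ((1 - t) *: X + t *: Y).
Proof.
move=> [dX [sX psdX]] [dY [sY psdY]] /andP[t_ge0 t_le1].
split=> [i|]; first by rewrite !mxE dX dY !mulr1 subrK.
split=> [|x].
  by apply/matrixP => i j; rewrite !mxE -[in X j i]sX -[in Y j i]sY !mxE.
rewrite mulmxDr mulmxDl -!scalemxAr -!scalemxAl !mxE.
have := psdX x; have := psdY x; rewrite !mxE => hY hX.
by apply: addr_ge0; apply: mulr_ge0; rewrite ?subr_ge0.
Qed.

End MatrixForm.

Section SdrGeometry.
Variables (R : realFieldType) (n m : nat) (H : 'M[R]_(n, m)).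

Local Notation M := (Mmat R m).
Local Notation J := (ones R (m + 1) *m (ones R (m + 1))^T).
Local Notation last_index := (rshift m (@ord0 0)).

Lemma Mmat_ones : M *m ones R (m + 1) = 0.
Proof.
rewrite /Mmat /ones -(@col_mx_const _ m 1) mul_row_col mul1mx mulNmx.
by apply/eqP; rewrite subr_eq0; apply/eqP/matrixP => a b; rewrite !mxE big_ord1 !mxE mulr1.
Qed.

Lemma Mmat_J : M *m J = 0.
Proof. by rewrite mulmxA Mmat_ones mul0mx. Qed.

Lemma row_Mmat i : row i M = delta_mx 0 (lshift 1 i) - delta_mx 0 last_index.
Proof.
rewrite /Mmat row_row_mx row1 delta_mx_lshift delta_mx_rshift.
have -> : row i (- ones R m) = - (delta_mx 0 0 : 'M[R]_1).
  by apply/matrixP => a b; rewrite !mxE !ord1.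
by rewrite opp_row_mx add_row_mx subr0 sub0r.
Qed.

Lemma L0mat_gram : L0mat H = (H *m M)^T *m (H *m M).
Proof. by rewrite /L0mat trmx_mul !mulmxA. Qed.

Lemma Lmat_gram (y : 'cV[R]_n) : Lmat H y = (row_mx H (- y))^T *m row_mx H (- y).
Proof. by rewrite tr_row_mx mul_col_row /Lmat [(- y)^T]raddfN !mulmxN !mulNmx opprK. Qed.

Lemma row_mx_yvec (v : 'cV[R]_n) :
  row_mx H (- yvec H v) = H *m M - v *m delta_mx 0 last_index.
Proof.
have v_delta : v *m delta_mx 0 0 = v.
  by rewrite -colE; apply/matrixP => a b; rewrite !mxE ord1.
rewrite /Mmat delta_mx_rshift mul_mx_row mul_mx_row mulmx1 mulmx0 v_delta.
by rewrite opp_row_mx add_row_mx oppr0 addr0 /yvec opprD mulmxN.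
Qed.

Lemma mxtrace_Mmat_ge X i :
  feasX X -> 2 - 2 * X (lshift 1 i) last_index <= mxform X M M.
Proof.
move=> [dX psdX]; rewrite /mxform /mxtrace (bigD1 i) //=.
have symX a b : X b a = X a b by rewrite -{1}psdX.1 mxE.
have -> : (M *m X *m M^T) i i = 2 - 2 * X (lshift 1 i) last_index.
  rewrite mxform_row_diag row_Mmat !(mxformDl, mxformDr, mxformNl, mxformNr).
  by rewrite !mxform_delta !dX symX; ring.
rewrite lerDl; apply: sumr_ge0 => j _.
by rewrite mxform_row_diag psd_mxform_row_ge0.
Qed.

Lemma is_tau_scaled_le tau X :
  is_tau H tau -> feasX X -> 1 <= mxform X M M ->
  tau * mxform X M M <= \tr (L0mat H *m X).
Proof.
move=> [_ tau_min] fX s_ge1; set s := mxform X M M in s_ge1 *.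
have s_gt0 : 0 < s by apply: lt_le_trans s_ge1.
set t := s^-1.
have ts : t * s = 1 by rewrite mulVf // gt_eqF.
have t_range : 0 <= t <= 1.
  by rewrite invr_ge0 ltW //= invf_le1.
have HMJ : H *m M *m J = 0 by rewrite -mulmxA Mmat_J mulmx0.
have fX' := feasX_convex (feasX_outer_ones R (m + 1)) fX t_range.
have inH' : inH ((1 - t) *: J + t *: X).
  rewrite /inH; change (mxform ((1 - t) *: J + t *: X) M M = 1).
  by rewrite mxform_combination (mxform_mul0 _ Mmat_J) mulr0 add0r.
have := tau_min _ fX' inH'.
rewrite L0mat_gram !mxtrace_gram mxform_combination (mxform_mul0 _ HMJ) mulr0 add0r.
set a := mxform X _ _ => tau_le.
have : tau * s <= t * a * s by rewrite ler_wpM2r // ltW.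
by rewrite mulrAC ts mul1r.
Qed.

Lemma sdr_optimal_L0mat_le (v : 'cV[R]_n) X :
  sdr_optimal (Lmat H (yvec H v)) X -> \tr (L0mat H *m X) <= 4 * sqnorm v.
Proof.
move=> [[dX psdX] X_opt].
set A := H *m M; set Q := v *m delta_mx 0 last_index.
have AJ : A *m J = 0 by rewrite -mulmxA Mmat_J mulmx0.
have LmatE Y : \tr (Lmat H (yvec H v) *m Y) = mxform Y (A - Q) (A - Q).
  by rewrite Lmat_gram row_mx_yvec mxtrace_gram.
have [dJ [sJ _]] := feasX_outer_ones R (m + 1).
have LJ : \tr (Lmat H (yvec H v) *m J) = sqnorm v.
  rewrite LmatE !(mxformDl, mxformDr, mxformNl, mxformNr) (mxformC Q A sJ).
  by rewrite !(mxform_mul0 _ AJ) mxform_outer dJ; ring.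
have opt_le : mxform X (A - Q) (A - Q) <= sqnorm v.
  by rewrite -LmatE -LJ; apply: X_opt; apply: feasX_outer_ones.
have := mxform_parallelogram X (A - Q) Q; rewrite subrK mxform_outer dX.
have := psd_mxform_ge0 (A - Q - Q) psdX.
rewrite L0mat_gram mxtrace_gram -/A; lra.
Qed.

End SdrGeometry.

Theorem lemma1 (R : realFieldType) (n m : nat) (H : 'M[R]_(n, m)) (v : 'cV[R]_n)
  (tau : R) :
  is_tau H tau ->
  4 * sqnorm v < tau ->
  forall Xs : 'M[R]_(m + 1),
    sdr_optimal (Lmat H (yvec H v)) Xs ->
    forall i : 'I_m, sgn (Xs (lshift 1 i) (rshift m ord0)) = 1.
Proof.
move=> tau_H tau_gt Xs Xs_opt i.
rewrite /sgn; case: ifP => // /negbT; rewrite -leNgt => entry_le0; exfalso.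
have s_ge := mxtrace_Mmat_ge i Xs_opt.1.
have s_ge1 : 1 <= mxform Xs (Mmat R m) (Mmat R m) by lra.
have := is_tau_scaled_le tau_H Xs_opt.1 s_ge1.
have := sdr_optimal_L0mat_le Xs_opt.
have := sqnorm_ge0 v.
nra.
Qed.
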